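(* Let $R$ be a field, and let $\ell,\ell'\in R[x]$ be of degree $1$; write $\ell'=r\ell-s$ with $r\in R^{*}$ and $s\in R$. Then $\ell'\sim\ell$ if and only if exactly one of the following holds: (1) $r=1$ and $s=0$ (i.e. $\ell'=\ell$); or (2) $r\neq1$, $s\neq0$, and $\frac{s}{r-1}$ has infinite multiplicative order in $R^{*}$.
   Context: For a ring $S$ and $\ell,\ell'\in S$, $\ell$ and $\ell'$ are called 1-connected, written $\ell\sim\ell'$, if for all positive integers $m,n$ such that $(\ell-\ell')\mid(\ell^m-(\ell')^n)$ we must have $m=n$. $R[x]$ is the polynomial ring in one indeterminate over the field $R$. *)

From HB Require Import structures.
From mathcomp Require Import all_boot all_order all_algebra.
Set Implicit Arguments. Unset Strict Implicit. Unset Printing Implicit Defensive.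
Import GRing.Theory.
Local Open Scope ring_scope.

Definition rdvd (S : comRingType) (a b : S) : Prop := exists q : S, b = q * a.

Definition one_connected (S : comRingType) (l l' : S) : Prop :=
  forall m n : nat, (0 < m)%N -> (0 < n)%N ->
    rdvd (l - l') (l ^+ m - l' ^+ n) -> m = n.

Definition infinite_mult_order (R : unitRingType) (x : R) : Prop :=
  x \is a GRing.unit /\ forall n : nat, (0 < n)%N -> x ^+ n != 1.

From HB Require Import structures.
From mathcomp Require Import all_boot all_order all_algebra.
Set Implicit Arguments. Unset Strict Implicit. Unset Printing Implicit Defensive.
Import GRing.Theory.
Local Open Scope ring_scope.

(* Let l, l' be linear polynomials over a field R with l' = r l - s, r <> 0.
   The proof splits on whether the difference d = l' - l is constant.
   - If r = 1 then d = -s is constant.  For s = 0 we have l' = l, and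
     l ~ l holds because l^m = l^n forces m = n by comparing degrees.  For
     s <> 0 the difference is a unit, so it divides everything and 1-connectedness
     fails (take m = 1, n = 2).
   - If r <> 1 then d = (r - 1) l - s is linear with a root a.  Divisibility by
     a linear polynomial is vanishing at its root, and l and l' agree at a with
     common value c = l(a) = s/(r - 1).  Hence l' ~ l iff c^m = c^n forces m = n
     for positive m, n, which in a field means that c has infinite order. *)

Definition pos_powers_injective {S : pzRingType} (c : S) : Prop :=
  forall m n : nat, (0 < m)%N -> (0 < n)%N -> c ^+ m = c ^+ n -> m = n.

Lemma exactly_one_of_exclusive (A B : Prop) :
  ~ (A /\ B) -> ((A /\ ~ B) \/ (~ A /\ B) <-> A \/ B).
Proof. tauto. Qed.

(* In a field, positive powers of c are distinct iff c has infinite order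
   in the unit group (c = 0 fails since 0^1 = 0^2). *)
Lemma pos_powers_injectiveP (F : fieldType) (c : F) :
  pos_powers_injective c <-> infinite_mult_order c.
Proof.
split=> [inj | [c_unit c_inf] m n m_gt0 n_gt0 cmn].
  have c_neq0 : c != 0.
    by apply/eqP=> c0; have := inj 1%N 2%N isT isT; rewrite c0 !expr0n => /(_ erefl).
  split=> [|k k_gt0]; first by rewrite unitfE.
  apply/eqP=> ck1; have := inj k.+1 1%N isT isT.
  by rewrite exprS ck1 mulr1 => /(_ erefl) [k0]; rewrite k0 in k_gt0.
have c_neq0 : c != 0 by rewrite -unitfE.
(* if m < n then c^(n - m) = 1, and symmetrically *)
have shift p q : (p < q)%N -> c ^+ p = c ^+ q -> False.
  move=> pq cpq; have := c_inf (q - p)%N; rewrite subn_gt0 pq => /(_ isT) /eqP; apply.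
  apply: (mulfI (expf_neq0 p c_neq0)).
  by rewrite -exprD subnKC ?(ltnW pq) // mulr1.
by case: (ltngtP m n) => [mn|nm|//]; [case: (shift m n) | case: (shift n m)].
Qed.

(* A polynomial is 1-connected to itself as soon as it is non-constant:
   l^m = l^n forces m = n by comparing degrees. *)
Lemma one_connected_refl (R : idomainType) (p : {poly R}) :
  (1 < size p)%N -> one_connected p p.
Proof.
move=> p_nonconst m n _ _ [q]; rewrite subrr mulr0 => /eqP; rewrite subr_eq0 => /eqP pmn.
have /eqP := size_exp p m; rewrite pmn size_exp eqn_mul2l => /orP[|/eqP //].
by rewrite -subn1 subn_eq0 leqNgt p_nonconst.
Qed.

(* If the difference is a unit it divides every element, so 1-connectedness
   fails: (l - l') | (l^1 - l'^2). *)
Lemma unit_diff_not_one_connected (S : comUnitRingType) (l l' : S) :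
  l - l' \is a GRing.unit -> ~ one_connected l l'.
Proof.
move=> d_unit conn; suff : (1 = 2)%N by [].
by apply: conn => //; exists ((l ^+ 1 - l' ^+ 2) / (l - l')); rewrite divrK.
Qed.

Lemma linear_poly_root (R : fieldType) (p : {poly R}) :
  size p = 2%N -> exists a, root p a.
Proof.
move=> p_size; have lead_neq0 : p`_1 != 0.
  have := lead_coef_eq0 p; rewrite /lead_coef p_size /= => ->.
  by rewrite -size_poly_eq0 p_size.
exists (- p`_0 / p`_1); apply/rootP.
rewrite horner_coef p_size !big_ord_recr big_ord0 /= add0r expr0 mulr1 expr1.
by rewrite mulrCA mulfV // mulr1 subrr.
Qed.

Lemma rdvd_linear_root (R : fieldType) (d q : {poly R}) (a : R) :
  size d = 2%N -> root d a -> (rdvd d q <-> root q a).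
Proof.
move=> d_size da.
have Xa_eqp_d : ('X - a%:P) %= d.
  by rewrite -dvdp_size_eqp ?dvdp_XsubCl // size_XsubC d_size.
rewrite -dvdp_XsubCl (eqp_dvdl _ Xa_eqp_d); split.
  by case=> q' ->; apply/dvdpP; exists q'.
by move/dvdpP=> [q' ->]; exists q'.
Qed.

Lemma one_connected_linear_diff (R : fieldType) (l l' : {poly R}) (a : R) :
  size (l' - l) = 2%N -> root (l' - l) a ->
  one_connected l' l <-> pos_powers_injective l.[a].
Proof.
move=> d_size da.
have l'a : l'.[a] = l.[a].
  by apply/eqP; rewrite -subr_eq0; move/rootP: da; rewrite !hornerE => ->.
have dvdE m n : rdvd (l' - l) (l' ^+ m - l ^+ n) <-> l.[a] ^+ m = l.[a] ^+ n.
  apply: (iff_trans (rdvd_linear_root _ d_size da)).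
  rewrite /root !(hornerE, horner_exp) l'a subr_eq0.
  by split=> [/eqP|->].
by split=> conn m n m_gt0 n_gt0 /dvdE; apply: conn.
Qed.

Lemma size_scale_subC (R : fieldType) (p : {poly R}) (k c : R) :
  (1 < size p)%N -> k != 0 -> size (k *: p - c%:P) = size p.
Proof.
move=> p_nonconst k_neq0; rewrite size_polyDl size_scale //.
by rewrite size_polyN (leq_ltn_trans (size_polyC_leq1 c)) // size_scale.
Qed.

Theorem lemma2p7 (R : fieldType) (l l' : {poly R}) (r s : R) :
  size l = 2%N -> size l' = 2%N -> r != 0 ->
  l' = r *: l - s%:P ->
  (one_connected l' l <->
    (((r = 1 /\ s = 0) /\ ~ (r != 1 /\ s != 0 /\ infinite_mult_order (s / (r - 1))))
     \/ (~ (r = 1 /\ s = 0) /\ (r != 1 /\ s != 0 /\ infinite_mult_order (s / (r - 1)))))).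
Proof.
move=> l_size _ _ l'_def.
have exclusive : ~ ((r = 1 /\ s = 0) /\
    (r != 1 /\ s != 0 /\ infinite_mult_order (s / (r - 1)))).
  by case=> [[-> _] [/eqP]].
apply: (iff_trans _ (iff_sym (exactly_one_of_exclusive exclusive))).
have [r1|r_neq1] := eqVneq r 1.
  have [s0|s_neq0] := eqVneq s 0.
    rewrite l'_def r1 s0 scale1r subr0; split=> [_|_]; first by left.
    by apply: one_connected_refl; rewrite l_size.
  split=> [conn|]; last by case=> [[_ /eqP]|[]]; rewrite ?(negbTE s_neq0).
  exfalso; apply: (unit_diff_not_one_connected _ conn).
  rewrite l'_def r1 scale1r addrAC subrr add0r -polyCN poly_unitE size_polyC.
  by rewrite oppr_eq0 s_neq0 coefC unitfE oppr_eq0.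
have r1_neq0 : r - 1 != 0 by rewrite subr_eq0.
have d_def : l' - l = (r - 1) *: l - s%:P by rewrite l'_def scalerBl scale1r addrAC.
have d_size : size (l' - l) = 2%N by rewrite d_def size_scale_subC ?l_size.
have [a da] := linear_poly_root d_size.
have la : l.[a] = s / (r - 1).
  move/rootP: (da); rewrite d_def !hornerE => /eqP; rewrite subr_eq0 => /eqP <-.
  by rewrite mulrC mulKf.
apply: (iff_trans (one_connected_linear_diff d_size da)); rewrite la.
apply: (iff_trans (pos_powers_injectiveP _)).
split=> [inf|[[/eqP] | [_ [] //]]]; last by rewrite (negbTE r_neq1).
right; do !split=> //; apply/eqP=> s0; move: inf; rewrite s0 mul0r => -[].
by rewrite unitfE eqxx.
Qed.
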